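(* Let $M=([n],\mathscr C)$ be a simple matroid. Let $B$ be the set of circuits $C\in\mathscr C$ that cannot be obtained by pasting, i.e. for which there are no circuits $C_1,C_2$ with $|C_1\cap C_2|=1$ and $C_1\triangle C_2=C$. Then $B$ is a tropical basis of $M$.
   Context: A matroid is simple if every circuit has cardinality greater than $2$. Let ${\bf TP}^{n-1}$ be the tropical projective space over $(\mathbb R\cup\{-\infty\},\max,+)$. For a circuit $C$, $V(C)$ is the set of $x\in{\bf TP}^{n-1}$ such that $\max\{x_i:i\in C\}$ is attained at least twice. For $B\subseteq\mathscr C$, set $V(B)=\bigcap_{C\in B}V(C)$. A subset $B\subseteq\mathscr C$ is a tropical basis if $V(B)=V(\mathscr C)$. $\triangle$ denotes symmetric difference. *)

From HB Require Import structures.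
From mathcomp Require Import all_boot all_order all_algebra.
From mathcomp Require Import reals.
Set Implicit Arguments. Unset Strict Implicit. Unset Printing Implicit Defensive.
Import Order.TTheory GRing.Theory Num.Theory.
Local Open Scope ring_scope.

Definition is_matroid_circuits (n : nat) (circ : {set {set 'I_n}}) : Prop :=
  [/\ set0 \notin circ,
      (forall C1 C2, C1 \in circ -> C2 \in circ -> C1 \subset C2 -> C1 = C2) &
      (forall C1 C2 e, C1 \in circ -> C2 \in circ -> C1 != C2 ->
         e \in C1 :&: C2 ->
         exists2 C3, C3 \in circ & C3 \subset (C1 :|: C2) :\ e)].

Definition simple_matroid (n : nat) (circ : {set {set 'I_n}}) : Prop :=
  forall C, C \in circ -> (2 < #|C|)%N.

(** Tropical numbers R ∪ {-oo}: [None] is -oo. *)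
Definition trop (R : realType) := option R.

Definition trop_le (R : realType) (a b : trop R) : bool :=
  match a, b with
  | None, _ => true
  | Some _, None => false
  | Some x, Some y => x <= y
  end.

(** Representatives of points of TP^{n-1}: vectors in (R ∪ {-oo})^n not
    identically -oo.  (All sets V(.) below are invariant under adding a
    real constant, so working with representatives is harmless.) *)
Definition TP_point (R : realType) (n : nat) (x : 'I_n -> trop R) : Prop :=
  exists i, x i != None.

Definition in_V (R : realType) (n : nat) (C : {set 'I_n}) (x : 'I_n -> trop R)
  : Prop :=
  exists i j, [/\ i \in C, j \in C, i != j, x i = x j &
                  forall k, k \in C -> trop_le (x k) (x i)].

Definition V_of (R : realType) (n : nat) (B : {set {set 'I_n}})
  (x : 'I_n -> trop R) : Prop :=
  TP_point x /\ forall C, C \in B -> in_V C x.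

Definition tropical_basis (R : realType) (n : nat)
  (circ B : {set {set 'I_n}}) : Prop :=
  B \subset circ /\
  forall x : 'I_n -> trop R, V_of B x <-> V_of circ x.

Definition nonpasted (n : nat) (circ : {set {set 'I_n}}) : {set {set 'I_n}} :=
  [set C in circ | ~~ [exists C1 in circ, exists C2 in circ,
      (#|C1 :&: C2| == 1)%N && ((C1 :\: C2) :|: (C2 :\: C1) == C)]].

From mathcomp Require Import all_boot all_order all_algebra reals.
From mathcomp Require Import zify.
Import Order.TTheory GRing.Theory Num.Theory.

Set Implicit Arguments.
Unset Strict Implicit.
Unset Printing Implicit Defensive.

(* If C1 ∩ C2 = {e}, a point of V(C1) ∩ V(C2) lies in V(C1 △ C2): take a
   maximiser k ≠ e of x on the circuit with the larger maximum, say C1; then k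
   is a maximiser on C1 △ C2, and its tie is either another element of C1 \ C2
   or e, in which case the maximum of C2 equals that of C1 and is attained on
   C2 \ C1.  In a simple matroid both C1 and C2 are strictly smaller than
   C1 △ C2, so induction on the size of circuits reduces V(C) to V(B). *)

Local Notation symdiff C1 C2 := ((C1 :\: C2) :|: (C2 :\: C1)).

Section TropicalOrder.
Variable R : realType.
Implicit Types a b c : trop R.

Lemma trop_le_trans a b c : trop_le a b -> trop_le b c -> trop_le a c.
Proof. by case: a => [a|]; case: b => [b|]; case: c => [c|] //=; apply: le_trans. Qed.

Lemma trop_le_total a b : trop_le a b || trop_le b a.
Proof. by case: a => [a|]; case: b => [b|] //=; apply: le_total. Qed.

Lemma trop_le_anti a b : trop_le a b -> trop_le b a -> a = b.
Proof.
case: a => [a|]; case: b => [b|] //= hab hba.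
by congr Some; apply/eqP; rewrite eq_le hab hba.
Qed.

End TropicalOrder.

Section Pasting.
Variables (R : realType) (n : nat) (x : 'I_n -> trop R).
Implicit Types C : {set 'I_n}.

Lemma in_V_max_avoid C e : in_V C x ->
  exists k l, k != e /\ [/\ k \in C, l \in C, k != l, x k = x l &
                             forall z, z \in C -> trop_le (x z) (x k)].
Proof.
case=> i [j [hi hj hij hxij maxi]].
have [hie|hie] := eqVneq i e; last by exists i, j.
exists j, i; split; first by rewrite -hie eq_sym.
split => //; first by rewrite eq_sym.
by move=> z /maxi; rewrite hxij.
Qed.

Lemma in_setD_setI1 C1 C2 e k :
  C1 :&: C2 = [set e] -> k \in C1 -> k != e -> k \in C1 :\: C2.
Proof.
move=> hI hk hke; rewrite inE hk andbT; apply: contra hke => hk2.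
by rewrite -in_set1 -hI inE hk hk2.
Qed.

Lemma in_V_symdiff_le C1 C2 e k l k' :
  C1 :&: C2 = [set e] ->
  k \in C1 -> l \in C1 -> k != e -> k != l -> x k = x l ->
  (forall z, z \in C1 -> trop_le (x z) (x k)) ->
  k' \in C2 -> k' != e -> (forall z, z \in C2 -> trop_le (x z) (x k')) ->
  trop_le (x k') (x k) ->
  in_V (symdiff C1 C2) x.
Proof.
move=> hI hk hl hke hkl hxkl maxk hk' hk'e maxk' hle.
have hI' : C2 :&: C1 = [set e] by rewrite setIC.
have kD := in_setD_setI1 hI hk hke.
have maxD z : z \in symdiff C1 C2 -> trop_le (x z) (x k).
  rewrite !inE => /orP[/andP[_ /maxk] //|/andP[_ /maxk'] hz].
  exact: trop_le_trans hz hle.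
have [hlE|hlNe] := eqVneq l e; last first.
  exists k, l; split => //; first by rewrite inE kD.
  by rewrite inE (in_setD_setI1 hI hl hlNe).
have k'D := in_setD_setI1 hI' hk' hk'e.
exists k, k'; split => //.
- by rewrite inE kD.
- by rewrite inE k'D orbT.
- by apply: contraTneq k'D => <-; rewrite inE hk.
- have he2 : e \in C2 by move: (set11 e); rewrite -hI inE => /andP[].
  by apply: trop_le_anti hle; rewrite hxkl hlE; apply: maxk'.
Qed.

Lemma in_V_symdiff C1 C2 : #|C1 :&: C2| = 1%N ->
  in_V C1 x -> in_V C2 x -> in_V (symdiff C1 C2) x.
Proof.
move=> /eqP/cards1P[e hI] hV1 hV2.
have [k [l [hke [hk hl hkl hxkl maxk]]]] := in_V_max_avoid e hV1.
have [k' [l' [hk'e [hk' hl' hkl' hxkl' maxk']]]] := in_V_max_avoid e hV2.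
case/orP: (trop_le_total (x k') (x k)) => hle.
  exact: (in_V_symdiff_le hI hk hl hke hkl hxkl maxk hk' hk'e maxk' hle).
rewrite setUC; apply: (in_V_symdiff_le _ hk' hl' hk'e hkl' hxkl' maxk' hk hke maxk hle).
by rewrite setIC.
Qed.

End Pasting.

Lemma card_symdiff_setI1 (T : finType) (C1 C2 : {set T}) :
  #|C1 :&: C2| = 1%N -> (#|symdiff C1 C2| + 2 = #|C1| + #|C2|)%N.
Proof.
move=> h1.
have hdis : (C1 :\: C2) :&: (C2 :\: C1) = set0.
  by apply/setP => z; rewrite !inE; case: (z \in C1); case: (z \in C2).
have := cardsID C2 C1; have := cardsID C1 C2.
by rewrite cardsU hdis cards0 subn0 setIC h1; lia.
Qed.

Lemma nonpasted_sub n (circ : {set {set 'I_n}}) : nonpasted circ \subset circ.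
Proof. by apply/subsetP => C; rewrite inE => /andP[]. Qed.

Lemma pasted_circuitP n (circ : {set {set 'I_n}}) C :
  C \in circ -> C \notin nonpasted circ ->
  exists C1 C2, [/\ C1 \in circ, C2 \in circ, #|C1 :&: C2| = 1%N &
                    symdiff C1 C2 = C].
Proof.
move=> hC; rewrite inE hC negbK => /existsP[C1 /andP[hC1]].
by case/existsP=> C2 /and3P[hC2 /eqP h1 /eqP hD]; exists C1, C2.
Qed.

Lemma in_V_of_nonpasted (R : realType) n (circ : {set {set 'I_n}})
    (x : 'I_n -> trop R) :
  simple_matroid circ -> (forall C, C \in nonpasted circ -> in_V C x) ->
  forall C, C \in circ -> in_V C x.
Proof.
move=> hs hB C; have [m] := ubnP #|C|; elim: m C => // m IH C /ltnSE hCm hC.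
have [|hCB] := boolP (C \in nonpasted circ); first exact: hB.
have [C1 [C2 [hC1 hC2 h1 hD]]] := pasted_circuitP hC hCB; subst C.
have hcard := card_symdiff_setI1 h1.
have s1 := hs _ hC1; have s2 := hs _ hC2.
by apply: in_V_symdiff => //; apply: IH => //; lia.
Qed.

Theorem lemma3 (R : realType) (n : nat) (circ : {set {set 'I_n}}) :
  is_matroid_circuits circ -> simple_matroid circ ->
  tropical_basis R circ (nonpasted circ).
Proof.
move=> _ hs; split; first exact: nonpasted_sub.
move=> x; split=> -[tp hV]; split=> // C hC.
- exact: (in_V_of_nonpasted hs hV).
- exact/hV/(subsetP (nonpasted_sub circ)).
Qed.
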